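(* Let $n\ge 2$ and let $R$ be the complex Leibniz algebra with basis $\{h,e_1,\dots,e_n\}$ and nonzero products $[e_i,e_1]=e_{i+1}$ ($1\le i\le n-1$), $[h,e_1]=-e_1$, $[e_i,h]=ie_i$ ($1\le i\le n$). A linear map $D:R\to R$ is an anti-derivation iff there exist $\beta_1,\dots,\beta_{n+1}\in\mathbb C$ such that $$D(h)=\sum_{i=1}^{n-1}i\beta_{i+1}e_i+\beta_{n+1}e_n,\qquad D(e_1)=\sum_{i=1}^n\beta_ie_i,\qquad D(e_i)=0\ (2\le i\le n).$$
   Context: Leibniz algebras are right Leibniz over $\mathbb C$: $[x,[y,z]]=[[x,y],z]-[[x,z],y]$. Unlisted products are zero. An anti-derivation is a linear map $D$ with $D([x,y])=[D(x),y]-[D(y),x]$ for all $x,y$. *)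

(* The field C is modelled as complex R (= R[i]) for R : realType. *)
From HB Require Import structures.
From mathcomp Require Import all_boot all_order all_algebra.
From mathcomp Require Import complex.
From mathcomp Require Import reals.
Set Implicit Arguments. Unset Strict Implicit. Unset Printing Implicit Defensive.
Import Order.TTheory GRing.Theory Num.Theory.
Local Open Scope ring_scope.

(* The underlying space of R: row vectors of length n+1 over C.
   Coordinate 0 is h, coordinate i (1 <= i <= n) is e_i. *)
Definition bv (C : fieldType) (n i : nat) : 'rV[C]_(n.+1) := delta_mx 0 (inord i).

Definition cst (C : fieldType) (n i j : nat) : 'rV[C]_(n.+1) :=
  if (i == 0%N) && (j == 1%N) then - bv C n 1
  else if (1 <= i <= n)%N && (j == 0%N) then i%:R *: bv C n i
  else if (1 <= i < n)%N && (j == 1%N) then bv C n i.+1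
  else 0.

Definition brk (C : fieldType) (n : nat) (x y : 'rV[C]_(n.+1)) : 'rV[C]_(n.+1) :=
  \sum_(i < n.+1) \sum_(j < n.+1) (x 0 i * y 0 j) *: cst C n i j.

Definition anti_derivation (C : fieldType) (n : nat)
  (D : 'rV[C]_(n.+1) -> 'rV[C]_(n.+1)) : Prop :=
  forall x y, D (brk x y) = brk (D x) y - brk (D y) x.

From HB Require Import structures.
From mathcomp Require Import all_boot all_algebra complex reals ring zify.
Set Implicit Arguments. Unset Strict Implicit. Unset Printing Implicit Defensive.
Import GRing.Theory.
Local Open Scope ring_scope.

(* Write x_m for the m-th coordinate of x, with x_0 the coefficient of h.
   As e_(i+1) = [e_i, e_1], an anti-derivation kills e_2, ..., e_n, so it is
   determined by V = D h and W = D e_1, and the identity on (h, e_1) says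
   exactly W_0 = 0 and V_m = m W_(m+1) for m < n.  Conversely, under these
   relations both sides of the identity on (x, y) equal (x_1 y_0 - x_0 y_1) W.
   The parameters are beta_i = W_i (i <= n) and beta_(n+1) = V_n. *)

Section AntiDerivations.
Variables (C : fieldType) (n : nat).
Hypothesis n_gt0 : (0 < n)%N.
Local Notation vec := 'rV[C]_n.+1.
Local Notation b := (bv C n).

Definition entry (u : vec) (m : nat) : C := u 0 (inord m).

Lemma entry_ord (u : vec) (k : 'I_n.+1) : u 0 k = entry u k.
Proof. by rewrite /entry inord_val. Qed.

Lemma entryP (u v : vec) : (forall m, (m <= n)%N -> entry u m = entry v m) -> u = v.
Proof. by move=> uv; apply/rowP => k; rewrite !entry_ord uv ?leq_ord. Qed.

Lemma entryD (u v : vec) m : entry (u + v) m = entry u m + entry v m.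
Proof. by rewrite /entry mxE. Qed.

Lemma entryN (u : vec) m : entry (- u) m = - entry u m.
Proof. by rewrite /entry mxE. Qed.

Lemma entryZ a (u : vec) m : entry (a *: u) m = a * entry u m.
Proof. by rewrite /entry mxE. Qed.

Lemma entry0 m : entry 0 m = 0.
Proof. by rewrite /entry mxE. Qed.

Lemma entry_bv i m : (i <= n)%N -> (m <= n)%N -> entry (b i) m = (i == m)%:R.
Proof. by move=> hi hm; rewrite /entry /bv mxE eqxx -val_eqE /= !inordK // eq_sym. Qed.

Lemma sum_delta (F : nat -> C) m : (m <= n)%N ->
  \sum_(0 <= i < n.+1) (i == m)%:R * F i = F m.
Proof.
move=> hm; transitivity (\sum_(0 <= i < n.+1 | i == m) F i).
  by rewrite [RHS]big_mkcond; apply: eq_bigr => i _; case: eqP; rewrite ?mul1r ?mul0r.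
by rewrite big_nat1_eq ltnS hm.
Qed.

Lemma entry_sum_bv a N (f : nat -> C) m : (N <= n.+1)%N -> (m <= n)%N ->
  entry (\sum_(a <= i < N) f i *: b i) m = if (a <= m < N)%N then f m else 0.
Proof.
move=> hN hm; transitivity (\sum_(a <= i < N | i == m) f i); last by rewrite big_nat1_eq.
rewrite /entry summxE [RHS]big_mkcond; apply: eq_big_nat => i /andP [_ hi].
rewrite mxE -/(entry _ _) entry_bv //.
  by case: eqP; rewrite ?mulr1 ?mulr0.
exact: leq_trans hi hN.
Qed.

Lemma entry_sum I (r : seq I) (P : pred I) (F : I -> vec) m :
  entry (\sum_(i <- r | P i) F i) m = \sum_(i <- r | P i) entry (F i) m.
Proof. by rewrite /entry summxE. Qed.

Lemma cst_eq0 i j : (1 < j)%N -> cst C n i j = 0.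
Proof. by move=> hj; rewrite /cst (gtn_eqF hj) (gtn_eqF (ltnW hj)) !andbF. Qed.

Lemma entry_cst0 i m : (i <= n)%N -> (m <= n)%N ->
  entry (cst C n i 0) m = m%:R * (i == m)%:R.
Proof.
case: i => [|i] hi hm; rewrite /cst /=.
  by rewrite entry0; case: m {hm} => [|m]; rewrite ?mul0r ?mulr0.
by rewrite hi entryZ entry_bv //; case: eqP => [->|]; rewrite ?mulr0.
Qed.

Lemma entry_cst1 i m : (i <= n)%N -> (m <= n)%N ->
  entry (cst C n i 1) m = (1 < m)%:R * (i == m.-1)%:R - (i == 0)%:R * (m == 1)%:R.
Proof.
case: i => [|i] hi hm; rewrite /cst /=.
  rewrite entryN entry_bv //.
  by case: m {hm} => [|[|m]]; rewrite /= ?mul0r ?mulr0 ?mulr1 ?subr0 ?sub0r ?oppr0.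
change (1 == 0)%N with false; rewrite andbF eqxx andbT.
case: ifP => [i_lt_n|i_ge_n]; rewrite ?entry0 ?entry_bv // mul0r subr0;
  case: m hm => [|[|m]] hm; rewrite /= ?mulr0n ?mul0r ?mul1r ?eqSS //.
suff /negPf-> : i != m by [].
by apply: contraFneq i_ge_n => ->.
Qed.

Lemma brk_cst (u y : vec) : brk u y = \sum_(0 <= i < n.+1)
  ((entry u i * entry y 0) *: cst C n i 0 + (entry u i * entry y 1) *: cst C n i 1).
Proof.
rewrite big_mkord /brk; apply: eq_bigr => i _.
rewrite (eq_bigr (fun j : 'I_n.+1 => (entry u i * entry y j) *: cst C n i j)); last first.
  by move=> j _; rewrite !entry_ord.
rewrite -(big_mkord xpredT (fun j => (entry u i * entry y j) *: cst C n i j)).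
rewrite big_ltn // big_ltn ?ltnS // big_nat_cond big1 ?addr0 // => j /andP [/andP [j_gt1 _] _].
by rewrite cst_eq0 ?scaler0.
Qed.

Lemma entry_brk (u y : vec) m : (m <= n)%N ->
  entry (brk u y) m = m%:R * entry u m * entry y 0
    + (1 < m)%:R * entry u m.-1 * entry y 1 - (m == 1)%:R * entry u 0 * entry y 1.
Proof.
move=> hm; rewrite brk_cst entry_sum; transitivity (\sum_(0 <= i < n.+1)
   ((i == m)%:R * (m%:R * entry u i * entry y 0)
  + (i == m.-1)%:R * ((1 < m)%:R * entry u i * entry y 1)
  - (i == 0%N)%:R * ((m == 1)%:R * entry u i * entry y 1))).
  by apply: eq_big_nat => i /andP [_ hi]; rewrite entryD !entryZ entry_cst0 ?entry_cst1 //; ring.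
by rewrite !big_split sumrN /= !sum_delta // (leq_trans (leq_pred m)).
Qed.

Lemma row_sum_bv (z : vec) : z = \sum_(0 <= i < n.+1) entry z i *: b i.
Proof. by apply: entryP => m hm; rewrite entry_sum_bv // ltnS hm. Qed.

Lemma brk0l (y : vec) : brk 0 y = 0.
Proof. by apply: entryP => m hm; rewrite entry_brk // !entry0; ring. Qed.

Lemma brk_bv_eq0 (u : vec) j : (2 <= j <= n)%N -> brk u (b j) = 0.
Proof.
case/andP=> j_gt1 j_le_n; apply: entryP => m hm.
by rewrite entry_brk // !entry_bv // (gtn_eqF j_gt1) (gtn_eqF (ltnW j_gt1)) entry0 /=; ring.
Qed.

Lemma brk_bv0_bv1 : brk (b 0) (b 1) = - b 1.
Proof.
by apply: entryP => -[|[|m]] hm; rewrite entryN !entry_brk // !entry_bv ?(ltnW hm) //=; ring.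
Qed.

Lemma brk_bv_bv1 i : (1 <= i < n)%N -> brk (b i) (b 1) = b i.+1.
Proof.
case/andP=> i_gt0 i_lt_n; apply: entryP => -[|[|m]] hm.
all: rewrite entry_brk // !entry_bv ?(ltnW hm) ?(ltnW i_lt_n) //= ?eqSS ?(gtn_eqF i_gt0) /=; ring.
Qed.

Lemma bv_beta_formP (V W : vec) :
  (exists beta : nat -> C,
     V = \sum_(1 <= i < n) (i%:R * beta i.+1) *: b i + beta n.+1 *: b n
  /\ W = \sum_(1 <= i < n.+1) beta i *: b i)
  <-> entry W 0 = 0 /\ forall m, (m < n)%N -> entry V m = m%:R * entry W m.+1.
Proof.
split=> [[beta [-> ->]] | [W0 VW]].
  split=> [|m m_lt_n]; first by rewrite entry_sum_bv.
  rewrite entryD entryZ !entry_sum_bv ?entry_bv ?(ltnW m_lt_n) //.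
  rewrite (gtn_eqF m_lt_n) ltnS m_lt_n mulr0 addr0 andbT.
  by case: m m_lt_n => [|m] m_lt_n /=; rewrite ?mul0r // ltnS m_lt_n.
exists (fun i => if i == n.+1 then entry V n else entry W i).
split; apply: entryP => m hm; last first.
  rewrite entry_sum_bv // ltnS hm.
  by case: m hm => [|m] hm /=; rewrite ?W0 // eqSS (ltn_eqF hm).
rewrite entryD entryZ entry_sum_bv ?entry_bv // eqxx.
case: (ltngtP m n) hm => [m_lt_n|//|->] _; last by rewrite andbF add0r mulr1.
rewrite andbT mulr0 addr0 VW // eqSS (ltn_eqF m_lt_n).
by case: m {m_lt_n} => [|m] /=; rewrite ?mul0r.
Qed.

Section AntiDerivation.
Variable D : {linear vec -> vec}.
Local Notation V := (D (b 0)).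
Local Notation W := (D (b 1)).

Lemma anti_derivation_bv_eq0 :
  anti_derivation D -> forall j, (2 <= j <= n)%N -> D (b j) = 0.
Proof.
move=> AD; suff Dj j : (j.+2 <= n)%N -> D (b j.+2) = 0.
  by case=> [|[|j]] // /andP [_]; apply: Dj.
elim: j => [|j IH] hj; rewrite -brk_bv_bv1; try lia; rewrite (AD _ _); first exact: subrr.
by rewrite IH ?brk0l ?brk_bv_eq0 ?subrr //; lia.
Qed.

Lemma anti_derivation_entries : anti_derivation D ->
  entry W 0 = 0 /\ forall m, (m < n)%N -> entry V m = m%:R * entry W m.+1.
Proof.
move=> AD; have h_e1 m :
    entry (brk W (b 0)) m - entry (brk V (b 1)) m - entry W m = 0.
  have := congr1 (entry^~ m) (AD (b 0) (b 1)).
  by rewrite brk_bv0_bv1 linearN entryD !entryN => E; rewrite -[entry W m]opprK E; ring.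
have W0 : entry W 0 = 0.
  by apply/eqP; rewrite -oppr_eq0 -(h_e1 0%N) !entry_brk // !entry_bv //=; apply/eqP; ring.
split=> // -[_|m hm].
  by apply: subr0_eq; rewrite -(h_e1 1%N) !entry_brk // !entry_bv //= W0; ring.
by apply/esym/subr0_eq; rewrite -(h_e1 m.+2) !entry_brk // !entry_bv ?(ltnW hm) //=; ring.
Qed.

Lemma linear_bv01E : (forall j, (2 <= j <= n)%N -> D (b j) = 0) ->
  forall z, D z = entry z 0 *: V + entry z 1 *: W.
Proof.
move=> Dj z; rewrite {1}(row_sum_bv z) linear_sum big_ltn // big_ltn ?ltnS //.
rewrite big_nat_cond big1 ?addr0 ?linearZ_LR // => j /andP [/andP [j_gt1 j_lt_n] _].
by rewrite linearZ_LR Dj ?scaler0 // j_gt1 -ltnS.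
Qed.

Lemma anti_derivation_of_entries : entry W 0 = 0 ->
  (forall m, (m < n)%N -> entry V m = m%:R * entry W m.+1) ->
  (forall j, (2 <= j <= n)%N -> D (b j) = 0) -> anti_derivation D.
Proof.
move=> W0 VW Dj x y; have V0 : entry V 0 = 0 by rewrite VW // mul0r.
rewrite (linear_bv01E Dj (brk x y)) (linear_bv01E Dj x) (linear_bv01E Dj y).
apply: entryP => m hm.
rewrite !entryD !entryZ entryN !entry_brk // !entryD !entryZ.
case: m hm => [|[|m]] hm /=.
- by rewrite W0; ring.
- by rewrite V0 W0; ring.
- by rewrite [entry V m.+1]VW //; ring.
Qed.

Lemma anti_derivationP : anti_derivation D <->
  [/\ entry W 0 = 0, forall m, (m < n)%N -> entry V m = m%:R * entry W m.+1
    & forall j, (2 <= j <= n)%N -> D (b j) = 0].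
Proof.
split=> [AD | [W0 VW Dj]]; last exact: anti_derivation_of_entries.
by have [W0 VW] := anti_derivation_entries AD; split=> //; apply: anti_derivation_bv_eq0.
Qed.

End AntiDerivation.

End AntiDerivations.

Theorem mainTheorem7 (R : realType) (n : nat) (hn : (2 <= n)%N)
  (D : {linear 'rV[R[i]]_(n.+1) -> 'rV[R[i]]_(n.+1)}) :
  anti_derivation D <->
  exists beta : nat -> R[i],
    [/\ D (bv _ n 0) = \sum_(1 <= i < n) (i%:R * beta i.+1) *: bv _ n i
                       + beta n.+1 *: bv _ n n,
        D (bv _ n 1) = \sum_(1 <= i < n.+1) beta i *: bv _ n i
      & forall i : nat, (2 <= i <= n)%N -> D (bv _ n i) = 0].
Proof.
have n_gt0 : (0 < n)%N := ltnW hn.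
rewrite (anti_derivationP n_gt0); split=> [[W0 VW Dj] | [beta [DV DW Dj]]].
  by have [beta [DV DW]] := (bv_beta_formP _ _).2 (conj W0 VW); exists beta.
by have [W0 VW] := (bv_beta_formP _ _).1 (ex_intro _ beta (conj DV DW)).
Qed.
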